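(* Let $G$ be a graph, let $g:V(G)\to\mathbb N$, and let $v\in V(G)$. Suppose that $(G,g)$ has a removal scheme $\mathcal S=(<,\mathrm{sv})$ in which (i) $v\in\mathrm{sv}(u)$ for every $u\in N(v)$ deleted before $v$, and (ii) $x\notin\mathrm{sv}(v)$ for every $x\in N(v)$ deleted after $v$. Let $H=G-v$ and define $h:V(H)\to\mathbb N$ by $h(u)=g(u)-1$ if $u\in N(v)$ and $h(u)=g(u)$ otherwise. Then $H$ is $h$-removable.
   Context: All graphs are finite and simple. For a graph $G$, a function $f:V(G)\to\mathbb Z$, a vertex $u$ and a subset $W\subseteq N(u)$, the operation $\mathsf{DelSave}(G,f,u,W)$ outputs $G'=G-u$ and $f':V(G')\to\mathbb Z$ with $f'(x)=f(x)-1$ for $x\in N(u)\setminus W$ and $f'(x)=f(x)$ otherwise. This application is legal if $f(u)>\sum_{w\in W}f(w)$ and $f'(x)\ge1$ for all $x\in V(G')$. $G$ is $f$-removable (equivalently $(G,f)$ is removable) if all vertices of $G$ can be deleted by a sequence of legal $\mathsf{DelSave}$ applications, each time replacing $(G,f)$ by the output $(G',f')$; such a sequence is a removal scheme for $(G,f)$. A removal scheme is identified with the pair $(<,\mathrm{sv})$, where $<$ is the linear order in which vertices are deleted and $\mathrm{sv}(u)$ is the set $W$ used in the operation deleting $u$. The empty graph is trivially removable. *)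

From mathcomp Require Import all_boot all_order all_algebra.
Set Implicit Arguments. Unset Strict Implicit. Unset Printing Implicit Defensive.
Import Order.TTheory GRing.Theory Num.Theory.
Local Open Scope ring_scope.

(* A finite simple graph G is given by a vertex set V : {set T} inside a
   finType T and an adjacency relation e : rel T which is symmetric and
   irreflexive. Functions f : V(G) -> Z are represented as f : T -> int
   (values outside V are irrelevant). *)

Definition simple_rel (T : finType) (e : rel T) : Prop :=
  symmetric e /\ irreflexive e.

Definition nbhd (T : finType) (e : rel T) (V : {set T}) (u : T) : {set T} :=
  [set x in V | e u x].

Definition delsave_fun (T : finType) (e : rel T) (V : {set T})
    (f : T -> int) (u : T) (W : {set T}) : T -> int :=
  fun x => if (x \in nbhd e V u) && (x \notin W) then f x - 1 else f x.

Definition delsave_legal (T : finType) (e : rel T) (V : {set T})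
    (f : T -> int) (u : T) (W : {set T}) : Prop :=
  [/\ u \in V, W \subset nbhd e V u,
      \sum_(w in W) f w < f u
    & forall x, x \in V :\ u -> 1 <= delsave_fun e V f u W x].

(* (s, sv) is a removal scheme for ((V,e), f): s lists the vertices in the
   order they are deleted and sv u is the saved set W used when deleting u. *)
Fixpoint is_removal_scheme (T : finType) (e : rel T) (V : {set T})
    (f : T -> int) (s : seq T) (sv : T -> {set T}) : Prop :=
  match s with
  | [::] => V = set0
  | u :: s' => delsave_legal e V f u (sv u) /\
               is_removal_scheme e (V :\ u) (delsave_fun e V f u (sv u)) s' sv
  end.

Definition removable (T : finType) (e : rel T) (V : {set T}) (f : T -> int)
  : Prop := exists (s : seq T) (sv : T -> {set T}), is_removal_scheme e V f s sv.

From mathcomp Require Import all_boot all_order all_algebra.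
From mathcomp Require Import zify.
Import Order.TTheory GRing.Theory Num.Theory.
Local Open Scope ring_scope.

Set Implicit Arguments.
Unset Strict Implicit.
Unset Printing Implicit Defensive.

(* The function h is what DelSave(G, g, v, set0) leaves, so the scheme is
   replayed on G - v with v dropped from every saved set.  A deletion of u <> v
   stays legal: if u saved v then u is a neighbour of v, so h(u) = g(u) - 1,
   but u's saved sum also loses the weight of v, which is at least 1; if not,
   then by (i) u is no earlier neighbour of v and h(u) = g(u).  The only new
   decrements hit neighbours x of v, and these weigh at least 2 as long as v is
   present: if x goes first it saves v and so outweighs it, and if v goes first
   it does not save x, which must survive that decrement. *)

Section RemovalScheme.

Variables (T : finType) (e : rel T).

Lemma removal_scheme_eq_in (s : seq T) (sv : T -> {set T}) (V : {set T})
    (f f' : T -> int) :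
  {in V, f =1 f'} -> is_removal_scheme e V f s sv ->
  is_removal_scheme e V f' s sv.
Proof.
elim: s V f f' => [|u s IHs] V f f' //= eq_ff' [[uV svu_sub lt_sum ge1] sch].
have eq_del : {in V :\ u, delsave_fun e V f u (sv u) =1
                          delsave_fun e V f' u (sv u)}.
  by move=> x /setD1P[_ xV]; rewrite /delsave_fun eq_ff'.
split; last exact: IHs eq_del sch.
split=> // [|x xVu]; last by rewrite -eq_del //; apply: ge1.
have eq_sum : \sum_(w in sv u) f w = \sum_(w in sv u) f' w.
  by apply: eq_bigr => w /(subsetP svu_sub); rewrite inE => /andP[/eq_ff'].
by rewrite -eq_sum -eq_ff'.
Qed.

Lemma removal_scheme_setD1_saved (s : seq T) (sv : T -> {set T}) (v : T)
    (V : {set T}) (f : T -> int) :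
  v \notin V -> is_removal_scheme e V f s sv ->
  is_removal_scheme e V f [seq u <- s | u != v] (fun u => sv u :\ v).
Proof.
elim: s V f => [|u s IHs] V f //= vV [[uV svu_sub lt_sum ge1] sch].
have -> /= : u != v by apply: contraNneq vV => <-.
have -> : sv u :\ v = sv u.
  apply/setDidPl; rewrite disjoint_sym disjoints1.
  by apply: contra vV => /(subsetP svu_sub); rewrite inE => /andP[].
by split=> //; apply: IHs sch; rewrite !inE negb_and vV orbT.
Qed.

Lemma delsave_legal_saved_ge1 (V : {set T}) (f : T -> int) (u : T)
    (W : {set T}) :
  irreflexive e -> delsave_legal e V f u W -> {in W, forall w, 1 <= f w}.
Proof.
move=> irr_e [_ W_sub _ ge1] w wW.
have /setIdP[wV euw] := subsetP W_sub w wW.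
have wu : w != u by apply: contraTneq euw => ->; rewrite irr_e.
by have := ge1 w; rewrite /delsave_fun wW andbF !inE wu wV; apply.
Qed.

Lemma delsave_fun_le (V : {set T}) (f : T -> int) (u : T) (W : {set T})
    (x : T) :
  delsave_fun e V f u W x <= f x.
Proof. by rewrite /delsave_fun; case: ifP => _; rewrite ?gerBl. Qed.

Lemma delsave_fun_set0 (V : {set T}) (f : T -> int) (v x : T) :
  delsave_fun e V f v set0 x = if x \in nbhd e V v then f x - 1 else f x.
Proof. by rewrite /delsave_fun in_set0 andbT. Qed.

Lemma delsave_funC (V : {set T}) (f : T -> int) (u v : T) (W : {set T})
    (x : T) :
  x != u -> x != v ->
  delsave_fun e (V :\ u) (delsave_fun e V f u W) v set0 x =
  delsave_fun e (V :\ v) (delsave_fun e V f v set0) u (W :\ v) x.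
Proof.
move=> xu xv; rewrite /delsave_fun !inE xu xv /=.
by case: (x \in V); case: (e u x); case: (x \in W); case: (e v x).
Qed.

Section CompatibleScheme.

Variable sv : T -> {set T}.

Definition compatible_scheme (V : {set T}) (v : T) (s : seq T) : Prop :=
  (forall u, u \in nbhd e V v -> (index u s < index v s)%N -> v \in sv u) /\
  (forall x, x \in nbhd e V v -> (index v s < index x s)%N -> x \notin sv v).

Lemma compatible_scheme_behead (V : {set T}) (v u : T) (s : seq T) :
  u != v -> compatible_scheme V v (u :: s) ->
  compatible_scheme (V :\ u) v s.
Proof.
move=> uv [saved_v unsaved_v].
have index_cons x : x \in nbhd e (V :\ u) v ->
    x \in nbhd e V v /\ index x (u :: s) = (index x s).+1.
  rewrite !inE => /andP[/andP[xu xV] evx].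
  by rewrite xV evx /= eq_sym (negbTE xu).
have index_v : index v (u :: s) = (index v s).+1 by rewrite /= (negbTE uv).
split=> x /index_cons[xN index_x] lt_index.
  by apply: saved_v; rewrite // index_x index_v.
by apply: unsaved_v; rewrite // index_x index_v.
Qed.

Hypothesis simple_e : simple_rel e.

Lemma compatible_scheme_nbhd_ge2 (v : T) (s : seq T) (V : {set T})
    (f : T -> int) :
  is_removal_scheme e V f s sv -> compatible_scheme V v s -> v \in V ->
  {in nbhd e V v, forall x, 2 <= f x}.
Proof.
have [_ irr_e] := simple_e.
elim: s V f => [|u s IHs] V f /=; first by move=> -> _; rewrite inE.
move=> [legal_u sch] [saved_v unsaved_v] vV x xN.
have /setIdP[xV evx] := xN.
have xv : x != v by apply: contraTneq evx => ->; rewrite irr_e.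
have saved_ge1 := delsave_legal_saved_ge1 irr_e legal_u.
have [_ _ lt_sum ge1] := legal_u.
have [ux|ux] := eqVneq u x.
  subst u; have vsv : v \in sv x.
    by apply: saved_v => //=; rewrite eqxx (negbTE xv).
  have : f v <= \sum_(w in sv x) f w.
    rewrite (bigD1 v) //= lerDl sumr_ge0 // => w /andP[/saved_ge1 + _].
    exact: le_trans.
  by have := saved_ge1 v vsv; lia.
have [uv|uv] := eqVneq u v.
  subst u; have xsv : x \notin sv v.
    by apply: unsaved_v => //=; rewrite eqxx eq_sym (negbTE xv).
  by have := ge1 x; rewrite /delsave_fun xN xsv !inE xv xV /= => /(_ isT); lia.
have xN' : x \in nbhd e (V :\ u) v by rewrite !inE eq_sym ux xV evx.
have vVu : v \in V :\ u by rewrite !inE eq_sym uv vV.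
have compat' := compatible_scheme_behead uv (conj saved_v unsaved_v).
have := IHs _ _ sch compat' vVu x xN'.
by have := delsave_fun_le V f u (sv u) x; lia.
Qed.

Lemma delsave_legal_setD1 (V : {set T}) (f : T -> int) (u v : T) (s : seq T) :
  u != v -> v \in V ->
  delsave_legal e V f u (sv u) ->
  is_removal_scheme e (V :\ u) (delsave_fun e V f u (sv u)) s sv ->
  compatible_scheme V v (u :: s) ->
  delsave_legal e (V :\ v) (delsave_fun e V f v set0) u (sv u :\ v).
Proof.
have [sym_e irr_e] := simple_e.
move=> uv vV legal_u sch compat.
have [uV svu_sub lt_sum ge1] := legal_u.
have saved_ge1 := delsave_legal_saved_ge1 irr_e legal_u.
split.
- by rewrite !inE uv uV.
- apply/subsetP => w; rewrite !inE => /andP[wv /(subsetP svu_sub)].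
  by rewrite inE wv.
- have [vsv|vsv] := boolP (v \in sv u).
    have uN : u \in nbhd e V v.
      by move: (subsetP svu_sub v vsv); rewrite !inE sym_e uV => /andP[].
    rewrite delsave_fun_set0 uN.
    have sum_split : \sum_(w in sv u) f w = f v + \sum_(w in sv u :\ v) f w.
      exact: big_setD1.
    have : \sum_(w in sv u :\ v) delsave_fun e V f v set0 w <=
           \sum_(w in sv u :\ v) f w.
      by apply: ler_sum => w _; apply: delsave_fun_le.
    by move: lt_sum; rewrite sum_split; have := saved_ge1 v vsv; lia.
  have uN : u \notin nbhd e V v.
    apply: contra vsv => uN; apply: compat.1 => //=.
    by rewrite eqxx (negbTE uv).
  have -> : sv u :\ v = sv u by apply/setDidPl; rewrite disjoint_sym disjoints1.
  rewrite delsave_fun_set0 (negbTE uN).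
  by apply: le_lt_trans lt_sum; apply: ler_sum => w _; apply: delsave_fun_le.
- move=> x; rewrite setDDl setUC -setDDl => xVuv.
  have /setD1P[xv /setD1P[xu xV]] := xVuv.
  rewrite -delsave_funC // delsave_fun_set0.
  have vVu : v \in V :\ u by rewrite !inE eq_sym uv vV.
  have [xN|xN] := ifP.
    have compat' := compatible_scheme_behead uv compat.
    by have := compatible_scheme_nbhd_ge2 sch compat' vVu xN; lia.
  by apply: ge1; rewrite !inE xu xV.
Qed.

Lemma removal_scheme_setD1 (v : T) (s : seq T) (V : {set T})
    (f : T -> int) :
  is_removal_scheme e V f s sv -> compatible_scheme V v s -> v \in V ->
  is_removal_scheme e (V :\ v) (delsave_fun e V f v set0)
    [seq u <- s | u != v] (fun u => sv u :\ v).
Proof.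
elim: s V f => [|u s IHs] V f /=; first by move=> -> _; rewrite inE.
move=> [legal_u sch] compat vV.
have [uv|uv] := eqVneq u v.
  subst u; apply: removal_scheme_eq_in (removal_scheme_setD1_saved _ sch).
    move=> x /setD1P[xv xV]; rewrite delsave_fun_set0 /delsave_fun.
    have [xN|//] := boolP (x \in nbhd e V v).
    have xsv : x \notin sv v.
      by apply: compat.2 => //=; rewrite eqxx eq_sym (negbTE xv).
    by rewrite xsv.
  by rewrite !inE eqxx.
have vVu : v \in V :\ u by rewrite !inE eq_sym uv vV.
split; first exact: delsave_legal_setD1 uv vV legal_u sch compat.
rewrite setDDl setUC -setDDl.
have compat' := compatible_scheme_behead uv compat.
apply: removal_scheme_eq_in (IHs _ _ sch compat' vVu).
by move=> x /setD1P[xu /setD1P[xv _]]; apply: delsave_funC.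
Qed.

End CompatibleScheme.

End RemovalScheme.

Theorem lemma3p2 (T : finType) (e : rel T) (V : {set T}) (g : T -> nat)
    (v : T) (s : seq T) (sv : T -> {set T}) :
  simple_rel e ->
  v \in V ->
  is_removal_scheme e V (fun x => (g x)%:Z) s sv ->
  (forall u, u \in nbhd e V v -> (index u s < index v s)%N -> v \in sv u) ->
  (forall x, x \in nbhd e V v -> (index v s < index x s)%N -> x \notin sv v) ->
  removable e (V :\ v)
    (fun u => if u \in nbhd e V v then (g u)%:Z - 1 else (g u)%:Z).
Proof.
move=> simple_e vV sch saved_v unsaved_v.
exists [seq u <- s | u != v], (fun u => sv u :\ v).
apply: removal_scheme_eq_in
  (removal_scheme_setD1 simple_e sch (conj saved_v unsaved_v) vV).
by move=> x _; rewrite delsave_fun_set0.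
Qed.
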